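(* Let $L$ be a finite-dimensional Lie algebra over a field $F$ and let $A_1/B_1$, $A_2/B_2$ be chief factors of $L$. Then (i) if $A_1/B_1$ and $A_2/B_2$ are $L$-isomorphic, then $C_L(A_1/B_1) = C_L(A_2/B_2)$; (ii) if $A_1/B_1$ and $A_2/B_2$ are non-abelian, then they are $L$-isomorphic if and only if $C_L(A_1/B_1) = C_L(A_2/B_2)$.
   Context: A chief factor of $L$ is a quotient $A/B$ of ideals $B \subsetneq A$ of $L$ with no ideal of $L$ strictly between $B$ and $A$. Two chief factors are $L$-isomorphic if they are isomorphic as $L$-modules (under the induced adjoint action). The centraliser of a chief factor is $C_L(A/B) = \{x \in L : [x,A] \subseteq B\}$. *)

(* finite-dimensional Lie algebras over a field F are modelled
   as a vectType F (finite-dimensional F-vector space) equipped with a bracket. *)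
From HB Require Import structures.
From mathcomp Require Import all_boot all_order all_algebra.
Set Implicit Arguments. Unset Strict Implicit. Unset Printing Implicit Defensive.
Import GRing.Theory.
Local Open Scope ring_scope.

Section Lie.
Variables (F : fieldType) (L : vectType F) (br : L -> L -> L).

Record lie_algebra : Prop := LieAlgebra {
  lie_linl : forall (c : F) (x y z : L), br (c *: x + y) z = c *: br x z + br y z;
  lie_linr : forall (c : F) (x y z : L), br z (c *: x + y) = c *: br z x + br z y;
  lie_alt  : forall x : L, br x x = 0;
  lie_jacobi : forall x y z : L,
      br x (br y z) + br y (br z x) + br z (br x y) = 0
}.

Definition lie_ideal (I : {vspace L}) : Prop :=
  forall x y : L, y \in I -> br x y \in I.

Definition chief_factor (A B : {vspace L}) : Prop :=
  [/\ lie_ideal A, lie_ideal B, (B <= A)%VS, B != A &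
      forall C : {vspace L}, lie_ideal C -> (B <= C)%VS -> (C <= A)%VS ->
        C = B \/ C = A].

Definition centraliser (A B : {vspace L}) : L -> Prop :=
  fun x => forall a : L, a \in A -> br x a \in B.

Definition nonabelian_factor (A B : {vspace L}) : Prop :=
  exists a b : L, [/\ a \in A, b \in A & br a b \notin B].

(* An F-linear map A1/B1 -> A2/B2 is the same as one induced by a
   linear map f : L -> L with f(A1) ⊆ A2 and f(B1) ⊆ B2; it is injective iff
   f^{-1}(B2) ∩ A1 ⊆ B1, surjective iff f(A1) + B2 = A2, and an L-module map iff
   f([x,a]) - [x,f(a)] ∈ B2 for all x ∈ L, a ∈ A1. *)
Definition L_isomorphic (A1 B1 A2 B2 : {vspace L}) : Prop :=
  exists f : 'End(L),
    [/\ (f @: A1 <= A2)%VS,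
        forall a : L, a \in A1 -> (f a \in B2) = (a \in B1),
        (f @: A1 + B2)%VS = A2 &
        forall x a : L, a \in A1 -> f (br x a) - br x (f a) \in B2].

End Lie.

From HB Require Import structures.
From mathcomp Require Import all_boot all_order all_algebra.
From Stdlib Require Import FunctionalExtensionality PropExtensionality.
Set Implicit Arguments. Unset Strict Implicit. Unset Printing Implicit Defensive.
Import GRing.Theory.
Local Open Scope ring_scope.

(* The centraliser C := C_L(A/B) is an ideal containing B, and for a chief
   factor minimality gives A ∩ C = B when A/B is non-abelian (A ∩ C strictly
   above B would force [A,A] ⊆ B).  An L-isomorphism transports the condition
   [x,A1] ⊆ B1 to [x,A2] ⊆ B2, which gives (i).  Conversely, if both factors are
   non-abelian with the same centraliser C, minimality applied to A1 ∩ (A2 + C)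
   shows A1 ⊆ A2 + C (otherwise [A1, A2] ⊆ B1, i.e. A2 ⊆ C and A2 = A2 ∩ C = B2),
   and symmetrically; then A1/B1 = A1/(A1 ∩ C) ≅ (A1 + C)/C = (A2 + C)/C ≅ A2/B2,
   realised by the projection onto A2 along C. *)

Section LieCentraliser.
Variables (F : fieldType) (L : vectType F) (br : L -> L -> L).
Hypothesis HL : lie_algebra br.

Lemma lie_linearl (a : L) : linear (fun x => br x a).
Proof. by move=> c x y; rewrite (lie_linl HL). Qed.

Lemma lie_linearr (a : L) : linear (fun x => br a x).
Proof. by move=> c x y; rewrite (lie_linr HL). Qed.

Definition adr (a : L) : {linear L -> L} :=
  HB.pack (fun x => br x a) (GRing.isLinear.Build _ _ _ _ _ (lie_linearl a)).

Definition adl (a : L) : {linear L -> L} :=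
  HB.pack (fun x => br a x) (GRing.isLinear.Build _ _ _ _ _ (lie_linearr a)).

Lemma lie_addl (u v w : L) : br (u + v) w = br u w + br v w.
Proof. exact: (linearD (adr w)). Qed.

Lemma lie_addr (w u v : L) : br w (u + v) = br w u + br w v.
Proof. exact: (linearD (adl w)). Qed.

Lemma lie_subr (w u v : L) : br w (u - v) = br w u - br w v.
Proof. exact: (linearB (adl w)). Qed.

Lemma lie_anticomm (x y : L) : br x y = - br y x.
Proof.
have := lie_alt HL (x + y).
rewrite lie_addl !lie_addr !(lie_alt HL) add0r addr0 => /eqP.
by rewrite addr_eq0 => /eqP.
Qed.

Lemma lie_bracketl (x y a : L) : br (br x y) a = br x (br y a) + br y (br a x).
Proof.
have /eqP := lie_jacobi HL a x y.
by rewrite -addrA addr_eq0 [br (br x y) a]lie_anticomm => /eqP ->; rewrite opprK.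
Qed.

Lemma lie_ideal_cap (U V : {vspace L}) :
  lie_ideal br U -> lie_ideal br V -> lie_ideal br (U :&: V)%VS.
Proof.
by move=> IU IV x y /memv_capP [Uy Vy]; apply/memv_capP; split; [apply: IU | apply: IV].
Qed.

Lemma lie_ideal_add (U V : {vspace L}) :
  lie_ideal br U -> lie_ideal br V -> lie_ideal br (U + V)%VS.
Proof.
move=> IU IV x y /memv_addP [u Uu [v Vv ->]].
by rewrite lie_addr memv_add ?IU ?IV.
Qed.

Lemma lie_ideal_bracketl (I : {vspace L}) (x y : L) :
  lie_ideal br I -> x \in I -> br x y \in I.
Proof. by move=> II Ix; rewrite lie_anticomm memvN II. Qed.

Definition centraliser_space (A B : {vspace L}) : {vspace L} :=
  (\bigcap_(i < \dim A) (linfun (adr (vbasis A)`_i) @^-1: B))%VS.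

Lemma mem_centraliser_space (A B : {vspace L}) (x : L) :
  (x \in centraliser_space A B) <-> centraliser br A B x.
Proof.
rewrite memvE; split.
  move/subv_bigcapP => Hx a Aa; rewrite (coord_vbasis Aa).
  rewrite -[br x _]/(adl x _) linear_sum; apply: memv_suml => i _.
  rewrite linearZ memvZ //.
  by have := Hx i isT; rewrite -memvE -memv_preim lfunE.
move=> Hx; apply/subv_bigcapP => i _.
rewrite -memvE -memv_preim lfunE /=; apply: Hx.
by apply: vbasis_mem; rewrite mem_nth // size_tuple.
Qed.

Lemma centraliser_spaceE (A1 B1 A2 B2 : {vspace L}) :
  centraliser br A1 B1 = centraliser br A2 B2 ->
  centraliser_space A1 B1 = centraliser_space A2 B2.
Proof.
move=> E; apply/vspaceP => x.
by apply/idP/idP => /mem_centraliser_space Hx; apply/mem_centraliser_space;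
  [by rewrite -E | by rewrite E].
Qed.

Lemma lie_ideal_centraliser (A B : {vspace L}) :
  lie_ideal br A -> lie_ideal br B -> lie_ideal br (centraliser_space A B).
Proof.
move=> IA IB x y /mem_centraliser_space Hy; apply/mem_centraliser_space => a Aa.
rewrite lie_bracketl memvD //; first by rewrite IB ?Hy.
by rewrite Hy // lie_anticomm memvN IA.
Qed.

Lemma sub_centraliser (A B : {vspace L}) :
  lie_ideal br B -> (B <= centraliser_space A B)%VS.
Proof.
move=> IB; apply/subvP => b Bb; apply/mem_centraliser_space => a _.
exact: lie_ideal_bracketl.
Qed.

Lemma cap_centraliser_nonabelian (A B : {vspace L}) :
  chief_factor br A B -> nonabelian_factor br A B ->
  (A :&: centraliser_space A B)%VS = B.
Proof.
move=> [IA IB sBA _ Hmin] [a [b [Aa Ab nab]]].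
have sB : (B <= A :&: centraliser_space A B)%VS.
  by rewrite subv_cap sBA sub_centraliser.
have [//|E] := Hmin _ (lie_ideal_cap IA (lie_ideal_centraliser IA IB)) sB (capvSl _ _).
have : a \in (A :&: centraliser_space A B)%VS by rewrite E.
by case/memv_capP => _ /mem_centraliser_space /(_ b Ab); rewrite (negbTE nab).
Qed.

Lemma sub_add_centraliser (A1 B1 A2 B2 : {vspace L}) :
  chief_factor br A1 B1 -> chief_factor br A2 B2 -> nonabelian_factor br A2 B2 ->
  centraliser_space A1 B1 = centraliser_space A2 B2 ->
  (A1 <= A2 + centraliser_space A1 B1)%VS.
Proof.
move=> [IA1 IB1 sBA1 _ Hmin1] H2 N2 E.
have C2 := cap_centraliser_nonabelian H2 N2.
case: H2 => IA2 _ _ nBA2 _.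
set C := centraliser_space A1 B1 in E *.
have sB : (B1 <= A1 :&: (A2 + C))%VS.
  by rewrite subv_cap sBA1 (subv_trans (sub_centraliser _ IB1) (addvSr _ _)).
have IAC := lie_ideal_add IA2 (lie_ideal_centraliser IA1 IB1).
have [E1|E1] := Hmin1 _ (lie_ideal_cap IA1 IAC) sB (capvSl _ _);
  last by rewrite -{1}E1 capvSr.
have A2C : (A2 <= C)%VS.
  apply/subvP => y Ay; apply/mem_centraliser_space => a Aa.
  rewrite -E1; apply/memv_capP; split; first exact: IA1.
  by rewrite (subvP (addvSl _ _)) // lie_ideal_bracketl.
by move: nBA2; rewrite -C2 -E (capv_idPl A2C) eqxx.
Qed.

Lemma centraliser_L_isomorphic (A1 B1 A2 B2 : {vspace L}) (x : L) :
  lie_ideal br A1 -> lie_ideal br B2 -> L_isomorphic br A1 B1 A2 B2 ->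
  centraliser br A1 B1 x <-> centraliser br A2 B2 x.
Proof.
move=> IA1 IB2 [f [sfA fB fA_B2 fmod]].
split=> Hx a.
  rewrite -fA_B2 => /memv_addP [_ /memv_imgP [a1 Aa1 ->] [b Bb ->]].
  rewrite lie_addr memvD ?(IB2 x b Bb) //.
  rewrite -[br x (f a1)](subKr (f (br x a1))) memvB ?fmod //.
  by rewrite fB ?IA1 ?Hx.
move=> Aa; rewrite -fB ?IA1 // -(subrK (br x (f a)) (f (br x a))).
by rewrite memvD ?fmod // Hx // (subvP sfA) ?memv_img.
Qed.

Lemma L_isomorphic_centraliser (A1 B1 A2 B2 : {vspace L}) :
  chief_factor br A1 B1 -> chief_factor br A2 B2 ->
  nonabelian_factor br A1 B1 -> nonabelian_factor br A2 B2 ->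
  centraliser_space A1 B1 = centraliser_space A2 B2 ->
  L_isomorphic br A1 B1 A2 B2.
Proof.
move=> H1 H2 N1 N2 E.
have S12 := sub_add_centraliser H1 H2 N2 E.
have S21 := sub_add_centraliser H2 H1 N1 (esym E).
have C1 := cap_centraliser_nonabelian H1 N1.
have C2 := cap_centraliser_nonabelian H2 N2.
rewrite -E in S21 C2.
set C := centraliser_space A1 B1 in S12 S21 C1 C2.
case: H1 => IA1 IB1 _ _ _; case: H2 => IA2 _ sBA2 _ _.
have IC : lie_ideal br C by exact: lie_ideal_centraliser.
have inB1 w : w \in A1 -> w \in C -> w \in B1 by rewrite -C1 => *; apply/memv_capP.
have inB2 w : w \in A2 -> w \in C -> w \in B2 by rewrite -C2 => *; apply/memv_capP.
have sB1C : (B1 <= C)%VS by rewrite -C1 capvSr.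
have sB2C : (B2 <= C)%VS by rewrite -C2 capvSr.
pose f := addv_pi1 A2 C; pose p := addv_pi2 A2 C.
have fE v : v \in A1 -> f v = v - p v.
  by move=> Av; rewrite -{2}(addv_pi1_pi2 (subvP S12 _ Av)) addrK.
have fA v : f v \in A2 by exact: memv_pi1.
have pC v : p v \in C by exact: memv_pi2.
have sfA : (f @: A1 <= A2)%VS by apply/subvP => _ /memv_imgP [u _ ->].
exists f; split => //.
- move=> a Aa; apply/idP/idP => Ba.
    by rewrite inB1 // -(subrK (p a) a) -fE // memvD ?pC ?(subvP sB2C).
  by rewrite inB2 // fE // memvB ?pC ?(subvP sB1C).
- apply/eqP; rewrite eqEsubv subv_add sfA sBA2 andbT.
  apply/subvP => a2 Aa2.
  have /memv_addP [a1 Aa1 [c Cc Ea2]] := subvP S21 _ Aa2.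
  rewrite -(subrK (f a1) a2) addrC memv_add ?memv_img // inB2 ?(memvB Aa2) //.
  by rewrite fE // Ea2 opprB addrC addrA subrK memvD.
- move=> x a Aa; rewrite inB2 ?(memvB (fA _) (IA2 _ _ (fA _))) //.
  rewrite !fE ?IA1 // lie_subr opprB addrC addrA subrK.
  by rewrite memvB ?IC.
Qed.

End LieCentraliser.

Theorem theorem2p1 (F : fieldType) (L : vectType F) (br : L -> L -> L)
    (HL : lie_algebra br) (A1 B1 A2 B2 : {vspace L})
    (H1 : chief_factor br A1 B1) (H2 : chief_factor br A2 B2) :
  (L_isomorphic br A1 B1 A2 B2 -> centraliser br A1 B1 = centraliser br A2 B2) /\
  (nonabelian_factor br A1 B1 -> nonabelian_factor br A2 B2 ->
     (L_isomorphic br A1 B1 A2 B2 <-> centraliser br A1 B1 = centraliser br A2 B2)).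
Proof.
have iso_cent : L_isomorphic br A1 B1 A2 B2 ->
    centraliser br A1 B1 = centraliser br A2 B2.
  case: H1 H2 => [IA1 _ _ _ _] [_ IB2 _ _ _] iso.
  apply: functional_extensionality => x; apply: propositional_extensionality.
  exact: (centraliser_L_isomorphic HL x IA1 IB2 iso).
split=> // N1 N2; split=> // E.
apply: (L_isomorphic_centraliser (HL := HL) H1 H2 N1 N2).
exact: centraliser_spaceE.
Qed.
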